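(* Under the standing assumptions, writing (R1) for $\mathscr{R}(A^*AB)=\mathscr{R}(B)$ and (R2) for $\mathscr{R}(CC^*B^* )=\mathscr{R}(B^* )$, the following hold. (49) $\{M^{(1,3,4)}\}\subseteq\{C^{-1}B^{(1)}A^{-1}\}$; and $\{M^{(1,3,4)}\}\supseteq\{C^{-1}B^{(1)}A^{-1}\}\Leftrightarrow\{M^{(1,3,4)}\}=\{C^{-1}B^{(1)}A^{-1}\}\Leftrightarrow B=0$ or $r(B)=m=n$. (50) $\{M^{(1,3,4)}\}\cap\{C^{-1}B^{(1,2)}A^{-1}\}\neq\emptyset$; $\{M^{(1,3,4)}\}\supseteq\{C^{-1}B^{(1,2)}A^{-1}\}\Leftrightarrow B=0$ or $r(B)=m=n$; $\{M^{(1,3,4)}\}\subseteq\{C^{-1}B^{(1,2)}A^{-1}\}\Leftrightarrow r(B)=m$ or $r(B)=n$; $\{M^{(1,3,4)}\}=\{C^{-1}B^{(1,2)}A^{-1}\}\Leftrightarrow r(B)=m=n$. (51) $\{M^{(1,3,4)}\}\cap\{C^{-1}B^{(1,3)}A^{-1}\}\neq\emptyset\Leftrightarrow\{M^{(1,3,4)}\}\subseteq\{C^{-1}B^{(1,3)}A^{-1}\}\Leftrightarrow$ (R1); and $\{M^{(1,3,4)}\}\supseteq\{C^{-1}B^{(1,3)}A^{-1}\}\Leftrightarrow\{M^{(1,3,4)}\}=\{C^{-1}B^{(1,3)}A^{-1}\}\Leftrightarrow B=0$ or ($r(B)=n$ and (R1)). (52) $\{M^{(1,3,4)}\}\cap\{C^{-1}B^{(1,4)}A^{-1}\}\neq\emptyset\Leftrightarrow\{M^{(1,3,4)}\}\subseteq\{C^{-1}B^{(1,4)}A^{-1}\}\Leftrightarrow$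 (R2); and $\{M^{(1,3,4)}\}\supseteq\{C^{-1}B^{(1,4)}A^{-1}\}\Leftrightarrow\{M^{(1,3,4)}\}=\{C^{-1}B^{(1,4)}A^{-1}\}\Leftrightarrow B=0$ or ($r(B)=m$ and (R2)). (53) $\{M^{(1,3,4)}\}\cap\{C^{-1}B^{(1,2,3)}A^{-1}\}\neq\emptyset\Leftrightarrow$ (R1); $\{M^{(1,3,4)}\}\supseteq\{C^{-1}B^{(1,2,3)}A^{-1}\}\Leftrightarrow B=0$ or ($r(B)=n$ and (R1)); $\{M^{(1,3,4)}\}\subseteq\{C^{-1}B^{(1,2,3)}A^{-1}\}\Leftrightarrow$ (R1) and $r(B)=\min\{m,n\}$; $\{M^{(1,3,4)}\}=\{C^{-1}B^{(1,2,3)}A^{-1}\}\Leftrightarrow r(B)=n$ and (R1). (54) $\{M^{(1,3,4)}\}\cap\{C^{-1}B^{(1,2,4)}A^{-1}\}\neq\emptyset\Leftrightarrow$ (R2); $\{M^{(1,3,4)}\}\supseteq\{C^{-1}B^{(1,2,4)}A^{-1}\}\Leftrightarrow B=0$ or ($r(B)=m$ and (R2)); $\{M^{(1,3,4)}\}\subseteq\{C^{-1}B^{(1,2,4)}A^{-1}\}\Leftrightarrow$ (R2) and $r(B)=\min\{m,n\}$; $\{M^{(1,3,4)}\}=\{C^{-1}B^{(1,2,4)}A^{-1}\}\Leftrightarrow r(B)=m$ and (R2). (55) $\{M^{(1,3,4)}\}\cap\{C^{-1}B^{(1,3,4)}A^{-1}\}\neq\emptyset\Leftrightarrow\{M^{(1,3,4)}\}=\{C^{-1}B^{(1,3,4)}A^{-1}\}\Leftrightarrow$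 (R1) and (R2). (56) $C^{-1}B^\dagger A^{-1}\in\{M^{(1,3,4)}\}\Leftrightarrow$ (R1) and (R2).
   Context: Standing assumptions: $m,n\ge1$; $A\in\mathbb{C}^{m\times m}$ and $C\in\mathbb{C}^{n\times n}$ are nonsingular; $B\in\mathbb{C}^{m\times n}$; $M=ABC$. For a complex matrix $X$, $X^*$ is its conjugate transpose, $r(X)$ its rank and $\mathscr{R}(X)$ its column space. For $X\in\mathbb{C}^{p\times q}$, a matrix $G\in\mathbb{C}^{q\times p}$ is called an $\{i,\ldots,j\}$-generalized inverse of $X$ (written $X^{(i,\ldots,j)}$) if it satisfies the equations numbered $i,\ldots,j$ among the four Penrose equations (i) $XGX=X$, (ii) $GXG=G$, (iii) $(XG)^*=XG$, (iv) $(GX)^*=GX$; $\{X^{(i,\ldots,j)}\}$ denotes the set of all such $G$. The Moore–Penrose inverse $X^\dagger$ is the unique matrix satisfying all four equations. For a type $(k,\ldots,l)$, $\{C^{-1}B^{(k,\ldots,l)}A^{-1}\}:=\{C^{-1}GA^{-1}: G\in\{B^{(k,\ldots,l)}\}\}$. *)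

(* Complex matrices are modelled over an arbitrary
   numClosedFieldType K (e.g. algC), which carries complex conjugation. *)
From HB Require Import structures.
From mathcomp Require Import all_boot all_order all_algebra.
Set Implicit Arguments. Unset Strict Implicit. Unset Printing Implicit Defensive.
Import Order.TTheory GRing.Theory Num.Theory.
Local Open Scope ring_scope.

Definition ctr (K : numClosedFieldType) p q (X : 'M[K]_(p, q)) : 'M[K]_(q, p) :=
  (map_mx Num.conj X)^T.

Definition penrose (K : numClosedFieldType) p q (i : nat)
  (X : 'M[K]_(p, q)) (G : 'M[K]_(q, p)) : Prop :=
  match i with
  | 1%N => X *m G *m X = X
  | 2%N => G *m X *m G = G
  | 3%N => ctr (X *m G) = X *m G
  | 4%N => ctr (G *m X) = G *m X
  | _ => True
  end.

Definition ginv (K : numClosedFieldType) p q (s : seq nat)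
  (X : 'M[K]_(p, q)) (G : 'M[K]_(q, p)) : Prop :=
  forall i, i \in s -> penrose i X G.

Definition moore_penrose (K : numClosedFieldType) p q
  (X : 'M[K]_(p, q)) (G : 'M[K]_(q, p)) : Prop := ginv [:: 1; 2; 3; 4]%N X G.

Definition tgi (K : numClosedFieldType) m n (s : seq nat)
  (A : 'M[K]_m) (B : 'M[K]_(m, n)) (C : 'M[K]_n) (H : 'M[K]_(n, m)) : Prop :=
  exists G, ginv s B G /\ H = invmx C *m G *m invmx A.

(* column space equality R(X) = R(Y), via row spaces of transposes *)
Definition colspace_eq (K : numClosedFieldType) p q r
  (X : 'M[K]_(p, q)) (Y : 'M[K]_(p, r)) : Prop := (X^T == Y^T)%MS.

Definition set_sub (T : Type) (P Q : T -> Prop) : Prop := forall x, P x -> Q x.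
Definition set_eq (T : Type) (P Q : T -> Prop) : Prop := forall x, P x <-> Q x.
Definition set_meets (T : Type) (P Q : T -> Prop) : Prop := exists x, P x /\ Q x.

From HB Require Import structures.
From mathcomp Require Import all_boot all_order all_algebra.
From mathcomp Require Import zify.
Import Order.TTheory GRing.Theory Num.Theory.
Local Open Scope ring_scope.
Set Implicit Arguments. Unset Strict Implicit. Unset Printing Implicit Defensive.

(* Put [P = A^* A] and [Q = C C^*]. The map [H |-> C H A] identifies [M{1,3,4}] with the
   set of [G] such that [B G B = B] and [P B G], [G B Q] are hermitian, and each
   [C^-1 B{s} A^-1] with [B{s}]. The products [B G] and [G B] are constant on the first set
   (a [P]-hermitian idempotent is determined by its range), so it is
   [{G in B{1} : B G = B G0, G B = G0 B}] for any of its members [G0], which can moreover be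
   taken in [B{2}]. Each relation thus asks whether [B G] or [G B] is forced on a class of
   inverses: on [B{1}], [B G] is forced iff [r(B) = m] and [G B] iff [r(B) = n]; on
   [B{1,3}], [B G] is the orthogonal projector onto [R(B)], which is [P]-hermitian iff
   [R(P B) = R(B)]. When a product is not forced, one of [G0 + (I - G0 B) V G0],
   [G0 + G0 V (I - B G0)], [G0 + (I - G0 B) V (I - B G0)] moves it, for a suitable [V].
   The [{1,4}] cases are the [{1,3}] cases for [B^*]. *)

Definition hermitian (K : numClosedFieldType) p (X : 'M[K]_p) : Prop := ctr X = X.

Section ConjugateTranspose.
Variable K : numClosedFieldType.
Implicit Types p q r : nat.

Lemma ctr_mul p q r (X : 'M[K]_(p, q)) (Y : 'M[K]_(q, r)) : ctr (X *m Y) = ctr Y *m ctr X.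
Proof. by rewrite /ctr map_mxM trmx_mul. Qed.

Lemma ctrK p q : cancel (@ctr K p q) (@ctr K q p).
Proof. by move=> X; apply/matrixP=> i j; rewrite /ctr !mxE conjCK. Qed.

Lemma ctr_inj p q : injective (@ctr K p q).
Proof. exact: can_inj (@ctrK p q). Qed.

Lemma ctr0 p q : ctr (0 : 'M[K]_(p, q)) = 0.
Proof. by apply/matrixP=> i j; rewrite /ctr !mxE rmorph0. Qed.

Lemma ctr_eq0 p q (X : 'M[K]_(p, q)) : ctr X = 0 <-> X = 0.
Proof. by split=> [h|->]; [apply: ctr_inj; rewrite h ctr0 | exact: ctr0]. Qed.

Lemma ctr1 p : ctr (1%:M : 'M[K]_p) = 1%:M.
Proof. by rewrite /ctr map_mx1 trmx1. Qed.

Lemma ctr_invmx p (X : 'M[K]_p) : ctr (invmx X) = invmx (ctr X).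
Proof. by rewrite /ctr map_invmx trmx_inv map_trmx. Qed.

Lemma unitmx_ctr p (X : 'M[K]_p) : (ctr X \in unitmx) = (X \in unitmx).
Proof. by rewrite /ctr unitmx_tr (map_unitmx Num.conj). Qed.

Lemma mxrank_ctr p q (X : 'M[K]_(p, q)) : \rank (ctr X) = \rank X.
Proof. by rewrite /ctr mxrank_tr (mxrank_map Num.conj). Qed.

Lemma hermitian_gram p q (X : 'M[K]_(p, q)) : hermitian (ctr X *m X).
Proof. by rewrite /hermitian ctr_mul ctrK. Qed.

(* The diagonal of [X X^*] holds the squared norms of the rows of [X]. *)
Lemma mulmx_ctr_eq0 p q (X : 'M[K]_(p, q)) : X *m ctr X = 0 -> X = 0.
Proof.
move=> XX0; apply/matrixP=> i j; rewrite mxE.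
have := congr1 (fun Z : 'M[K]_p => Z i i) XX0; rewrite !mxE => sum0.
have sq0 : `|X i j| ^+ 2 = 0.
  apply: (psumr_eq0P (P := predT) (F := fun k => `|X i k| ^+ 2)) => [k _| |//].
    exact: exprn_ge0.
  by rewrite -[RHS]sum0; apply: eq_bigr => k _; rewrite /ctr !mxE normCK.
by apply/eqP; move/eqP: sq0; rewrite expf_eq0 /= normr_eq0.
Qed.

Lemma unitmx_gram p q (X : 'M[K]_(p, q)) : row_full X -> ctr X *m X \in unitmx.
Proof.
case/row_fullP=> D DX1; rewrite -row_free_unit -kermx_eq0; apply/eqP.
set Z := kermx _; have ZW : Z *m (ctr X *m X) = 0 by rewrite mulmx_ker.
have /mulmx_ctr_eq0 ZX0 : Z *m ctr X *m ctr (Z *m ctr X) = 0.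
  by rewrite ctr_mul ctrK mulmxA -(mulmxA Z) ZW mul0mx.
have XZ0 : X *m ctr Z = 0 by rewrite -[X]ctrK -ctr_mul ZX0 ctr0.
by rewrite -[Z]ctrK -[ctr Z]mul1mx -DX1 -mulmxA XZ0 mulmx0 ctr0.
Qed.

Lemma unitmx_cogram p q (X : 'M[K]_(p, q)) : row_free X -> X *m ctr X \in unitmx.
Proof.
rewrite /row_free -mxrank_ctr -[X in X *m _]ctrK => /eqP rX.
by apply: unitmx_gram; rewrite /row_full rX.
Qed.
End ConjugateTranspose.

Section MoorePenrose.
Variable K : numClosedFieldType.

Lemma moore_penrose_full_rank p q r (F : 'M[K]_(p, r)) (Gb : 'M[K]_(r, q)) :
  row_full F -> row_free Gb -> exists Y, moore_penrose (F *m Gb) Y.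
Proof.
move=> /unitmx_gram W1unit /unitmx_cogram W2unit.
set W1 := ctr F *m F in W1unit; set W2 := Gb *m ctr Gb in W2unit.
have FF s (Y : 'M[K]_(s, r)) : Y *m ctr F *m F = Y *m W1 by rewrite mulmxA.
have GG s (Y : 'M[K]_(s, r)) : Y *m Gb *m ctr Gb = Y *m W2 by rewrite mulmxA.
have W1h : ctr W1 = W1 by exact: hermitian_gram.
have W2h : ctr W2 = W2 by rewrite /W2 ctr_mul ctrK.
exists (ctr Gb *m invmx W2 *m invmx W1 *m ctr F) => i.
rewrite !inE => /or4P [] /eqP -> /=.
- by rewrite !mulmxA GG (mulmxK W2unit) FF (mulmxKV W1unit).
- by rewrite !mulmxA FF (mulmxKV W1unit) GG (mulmxKV W2unit).
- by rewrite !mulmxA GG (mulmxK W2unit) !ctr_mul ctrK ctr_invmx W1h !mulmxA.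
- by rewrite !mulmxA FF (mulmxKV W1unit) !ctr_mul ctrK ctr_invmx W2h !mulmxA.
Qed.

Lemma moore_penrose_exists p q (X : 'M[K]_(p, q)) : exists Y, moore_penrose X Y.
Proof.
by have := moore_penrose_full_rank (col_base_full X) (row_base_free X); rewrite mulmx_base.
Qed.
End MoorePenrose.

Section SetTransport.
Variables (T1 T2 : Type) (f : T1 -> T2) (g : T2 -> T1) (fgK : cancel g f).
Variables (X Y : T1 -> Prop) (X' Y' : T2 -> Prop).
Hypotheses (XX' : forall x, X x <-> X' (f x)) (YY' : forall x, Y x <-> Y' (f x)).

Lemma set_sub_transport : set_sub X Y <-> set_sub X' Y'.
Proof.
split=> sub x; last by move=> /XX' /sub /YY'.
by rewrite -[x]fgK => /XX' /sub /YY'.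
Qed.

Lemma set_meets_transport : set_meets X Y <-> set_meets X' Y'.
Proof.
split=> [[x [/XX' Xx /YY' Yx]]|[x []]]; first by exists (f x).
by rewrite -[x]fgK => /XX' Xx /YY' Yx; exists (g x).
Qed.

Lemma set_eq_transport : set_eq X Y <-> set_eq X' Y'.
Proof.
split=> eqXY x; last by rewrite XX' YY'.
by rewrite -[x]fgK -XX' -YY'.
Qed.
End SetTransport.

Section GeneralizedInverses.
Variable K : numClosedFieldType.
Variables (p q : nat) (X : 'M[K]_(p, q)) (G : 'M[K]_(q, p)).

Lemma ginv_singleP i : ginv [:: i] X G <-> penrose i X G.
Proof. by split=> [h|h j]; [apply: h; rewrite inE | rewrite inE => /eqP ->]. Qed.

Lemma ginv_pairP i j : ginv [:: i; j] X G <-> penrose i X G /\ penrose j X G.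
Proof.
split=> [h|[hi hj] k]; first by split; apply: h; rewrite !inE eqxx ?orbT.
by rewrite !inE => /orP [] /eqP ->.
Qed.

Lemma ginv_tripleP i j k :
  ginv [:: i; j; k] X G <-> [/\ penrose i X G, penrose j X G & penrose k X G].
Proof.
split=> [h|[hi hj hk] l]; first by split; apply: h; rewrite !inE eqxx ?orbT.
by rewrite !inE => /or3P [] /eqP ->.
Qed.

Lemma moore_penroseP : moore_penrose X G ->
  [/\ penrose 1%N X G, penrose 2%N X G, penrose 3%N X G & penrose 4%N X G].
Proof. by move=> h; split; apply: h; rewrite !inE eqxx ?orbT. Qed.

Lemma mulmx_ginv_full_col : \rank X = q -> X *m G *m X = X -> G *m X = 1%:M.
Proof.
move=> rX XGX; have /row_fullP [D DX1] : row_full X by rewrite /row_full rX.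
by rewrite -[G *m X]mul1mx -DX1 -mulmxA (mulmxA X) XGX.
Qed.

Lemma mulmx_ginv_full_row : \rank X = p -> X *m G *m X = X -> X *m G = 1%:M.
Proof.
move=> rX XGX; have /row_freeP [D XD1] : row_free X by rewrite /row_free rX.
by rewrite -[X *m G]mulmx1 -XD1 mulmxA XGX.
Qed.

Lemma rank_neq_col_subr_neq0 : \rank X <> q -> 1%:M - G *m X != 0.
Proof.
move=> rX; rewrite subr_eq0; apply/eqP => GX1; apply: rX; apply/eqP.
by apply/(@row_fullP _ _ _ X); exists G; rewrite -GX1.
Qed.

Lemma rank_neq_row_subr_neq0 : \rank X <> p -> 1%:M - X *m G != 0.
Proof.
move=> rX; rewrite subr_eq0; apply/eqP => XG1; apply: rX; apply/eqP.
by apply/(@row_freeP _ _ _ X); exists G; rewrite -XG1.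
Qed.
End GeneralizedInverses.

Lemma exists_mulmx_neq0 (K : numClosedFieldType) a b c d (X : 'M[K]_(a, b)) (Y : 'M[K]_(c, d)) :
  X != 0 -> Y != 0 -> exists V, X *m V *m Y != 0.
Proof.
move=> /matrix0Pn [i [j Xij]] /matrix0Pn [k [l Ykl]].
exists (delta_mx j k); apply/matrix0Pn; exists i, l.
rewrite -(mul_delta_mx (0 : 'I_1)) mulmxA -colE -mulmxA -rowE mxE big_ord1 !mxE.
exact: mulf_neq0.
Qed.

Section Perturbation.
Variables (K : numClosedFieldType) (m n : nat) (B : 'M[K]_(m, n)) (G0 : 'M[K]_(n, m)).
Hypotheses (G0_1 : B *m G0 *m B = B) (G0_2 : G0 *m B *m G0 = G0).

Let B_ker : B *m (1%:M - G0 *m B) = 0.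
Proof. by rewrite mulmxBr mulmx1 mulmxA G0_1 subrr. Qed.

Let ker_B : (1%:M - B *m G0) *m B = 0.
Proof. by rewrite mulmxBl mul1mx G0_1 subrr. Qed.

Let G0_2l s (Y : 'M[K]_(s, n)) : Y *m G0 *m B *m G0 = Y *m G0.
Proof. by rewrite -!mulmxA (mulmxA G0) G0_2. Qed.

Let B_neq0_G0B : B != 0 -> G0 *m B != 0.
Proof. by apply: contraNneq => G0B0; rewrite -G0_1 -mulmxA G0B0 mulmx0. Qed.

Let B_neq0_BG0 : B != 0 -> B *m G0 != 0.
Proof. by apply: contraNneq => BG00; rewrite -G0_1 BG00 mul0mx. Qed.

Lemma ginv12_perturb_right : \rank B <> n -> B != 0 ->
  exists G, [/\ ginv [:: 1; 2]%N B G, B *m G = B *m G0 & G *m B != G0 *m B].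
Proof.
move=> rB /B_neq0_G0B G0B0.
have [V XVG] := exists_mulmx_neq0 (rank_neq_col_subr_neq0 G0 rB) G0B0.
have BG : B *m (G0 + (1%:M - G0 *m B) *m V *m G0) = B *m G0.
  by rewrite (mulmxDr B) !mulmxA B_ker !mul0mx addr0.
exists (G0 + (1%:M - G0 *m B) *m V *m G0); split=> //; last first.
  by rewrite (mulmxDl G0) -(mulmxA _ G0 B) addrC -subr_eq0 addrK.
apply/ginv_pairP; split; rewrite /= ?BG //.
by rewrite -mulmxA BG (mulmxDl G0) !mulmxA G0_2 G0_2l.
Qed.

Lemma ginv12_perturb_left : \rank B <> m -> B != 0 ->
  exists G, [/\ ginv [:: 1; 2]%N B G, G *m B = G0 *m B & B *m G != B *m G0].
Proof.
move=> rB /B_neq0_BG0 BG00.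
have [V BVY] := exists_mulmx_neq0 BG00 (rank_neq_row_subr_neq0 G0 rB).
have GB : (G0 + G0 *m V *m (1%:M - B *m G0)) *m B = G0 *m B.
  by rewrite (mulmxDl G0) -!mulmxA ker_B !mulmx0 addr0.
exists (G0 + G0 *m V *m (1%:M - B *m G0)); split=> //; last first.
  by rewrite (mulmxDr B) !mulmxA addrC -subr_eq0 addrK.
apply/ginv_pairP; split=> /=; first by rewrite -(mulmxA B) GB mulmxA.
by rewrite GB (mulmxDr (G0 *m B)) !mulmxA G0_2.
Qed.

Lemma ginv1_perturb_not2 : \rank B <> m -> \rank B <> n ->
  exists G, [/\ B *m G *m B = B, B *m G = B *m G0, G *m B = G0 *m B & G *m B *m G != G].
Proof.
move=> rBm rBn.
have [V XVY] := exists_mulmx_neq0 (rank_neq_col_subr_neq0 G0 rBn) (rank_neq_row_subr_neq0 G0 rBm).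
set G := G0 + (1%:M - G0 *m B) *m V *m (1%:M - B *m G0).
have BG : B *m G = B *m G0 by rewrite (mulmxDr B) !mulmxA B_ker !mul0mx addr0.
have GB : G *m B = G0 *m B by rewrite (mulmxDl G0) -!mulmxA ker_B !mulmx0 addr0.
exists G; split=> //; first by rewrite BG.
have G0BX : G0 *m B *m (1%:M - G0 *m B) = 0 by rewrite -mulmxA B_ker mulmx0.
rewrite GB {2}/G (mulmxDr (G0 *m B)) !mulmxA G0_2 G0BX !mul0mx addr0.
by rewrite eq_sym -subr_eq0 addrC addKr.
Qed.
End Perturbation.

Definition wginv134 (K : numClosedFieldType) m n (P : 'M[K]_m) (Q : 'M[K]_n)
  (B : 'M[K]_(m, n)) (G : 'M[K]_(n, m)) : Prop :=
  [/\ B *m G *m B = B, hermitian (P *m (B *m G)) & hermitian (G *m B *m Q)].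

Section WeightedHermitian.
Variable K : numClosedFieldType.

Lemma hermitian_ctr p (X : 'M[K]_p) : hermitian (ctr X) <-> hermitian X.
Proof. by rewrite /hermitian ctrK; split=> /esym. Qed.

(* [X] and [Y] are idempotents with a common range, and [P X], [P Y] hermitian makes
   both of them the [P]-orthogonal projector onto it. *)
Lemma weighted_projector_unique p (P X Y : 'M[K]_p) : hermitian P -> P \in unitmx ->
  Y *m X = X -> X *m Y = Y -> hermitian (P *m X) -> hermitian (P *m Y) -> X = Y.
Proof.
move=> Ph Pu YX XY PXh PYh.
have PX : P *m X = ctr Y *m (P *m X) by rewrite -{1}YX mulmxA -{1}PYh ctr_mul Ph mulmxA.
have PY : ctr Y *m (P *m X) = P *m Y.
  by rewrite -PXh ctr_mul Ph mulmxA -ctr_mul XY -PYh ctr_mul Ph.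
by rewrite -(mulKmx Pu X) PX PY mulKmx.
Qed.

Lemma ginv13w_mulmx_unique m n (P : 'M[K]_m) (B : 'M[K]_(m, n)) G G' :
  hermitian P -> P \in unitmx -> B *m G *m B = B -> B *m G' *m B = B ->
  hermitian (P *m (B *m G)) -> hermitian (P *m (B *m G')) -> B *m G = B *m G'.
Proof.
move=> Ph Pu G1 G'1; apply: weighted_projector_unique => //.
  by rewrite mulmxA G'1.
by rewrite mulmxA G1.
Qed.

Lemma ginv14w_mulmx_unique m n (Q : 'M[K]_n) (B : 'M[K]_(m, n)) G G' :
  hermitian Q -> Q \in unitmx -> B *m G *m B = B -> B *m G' *m B = B ->
  hermitian (G *m B *m Q) -> hermitian (G' *m B *m Q) -> G *m B = G' *m B.
Proof.
move=> Qh Qu G1 G'1 G4 G'4.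
have ctr_ginv1 X : B *m X *m B = B -> ctr B *m ctr X *m ctr B = ctr B.
  by move=> XB; rewrite -!ctr_mul mulmxA XB.
have ctr_herm X : hermitian (X *m B *m Q) -> hermitian (Q *m (ctr B *m ctr X)).
  by move=> XBQ; rewrite -Qh -!ctr_mul; apply/hermitian_ctr.
apply: ctr_inj; rewrite !ctr_mul.
by apply: (ginv13w_mulmx_unique Qh Qu);
  [exact: ctr_ginv1 | exact: ctr_ginv1 | exact: ctr_herm | exact: ctr_herm].
Qed.

Lemma ginv13_mulmx_unique m n (B : 'M[K]_(m, n)) G G' :
  B *m G *m B = B -> B *m G' *m B = B ->
  hermitian (B *m G) -> hermitian (B *m G') -> B *m G = B *m G'.
Proof.
move=> G1 G'1 G3 G'3; apply: (ginv13w_mulmx_unique (ctr1 K m) (unitmx1 _ _)) => //.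
  by rewrite mul1mx.
by rewrite mul1mx.
Qed.

Lemma ginv14_mulmx_unique m n (B : 'M[K]_(m, n)) G G' :
  B *m G *m B = B -> B *m G' *m B = B ->
  hermitian (G *m B) -> hermitian (G' *m B) -> G *m B = G' *m B.
Proof.
move=> G1 G'1 G4 G'4; apply: (ginv14w_mulmx_unique (ctr1 K n) (unitmx1 _ _)) => //.
  by rewrite mulmx1.
by rewrite mulmx1.
Qed.

Lemma colspace_eqP p q r (X : 'M[K]_(p, q)) (Y : 'M[K]_(p, r)) :
  colspace_eq X Y <-> (exists V, X = Y *m V) /\ (exists W, Y = X *m W).
Proof.
split=> [/andP [/submxP [D XD] /submxP [E YE]] | [[V XV] [W YW]]].
  by split; [exists D^T | exists E^T]; apply: trmx_inj; rewrite trmx_mul trmxK.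
by apply/andP; split; apply/submxP; [exists V^T; rewrite XV | exists W^T; rewrite YW];
  rewrite trmx_mul.
Qed.

(* [P] commutes with the hermitian [B G]; hence [P B = B G P B] and [B = P B (G P^-1 B)]. *)
Lemma colspace_weight_of_hermitian m n (P : 'M[K]_m) (B : 'M[K]_(m, n)) G :
  hermitian P -> P \in unitmx -> B *m G *m B = B ->
  hermitian (P *m (B *m G)) -> hermitian (B *m G) -> colspace_eq (P *m B) B.
Proof.
move=> Ph Pu G1 G3w G3.
have PBG : P *m (B *m G) = B *m G *m P by rewrite -G3w ctr_mul Ph G3.
apply/colspace_eqP; split.
  by exists (G *m P *m B); rewrite -{1}G1 mulmxA PBG !mulmxA.
have BG : P *m (B *m G) *m invmx P = B *m G by rewrite PBG mulmxK.
by exists (G *m invmx P *m B); rewrite !mulmxA -(mulmxA P B G) BG G1.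
Qed.

(* Writing [B = P B W]: [(B G)^* B = (B G)^* P B W = P B G B W = B],
   so [B G = (B G)^* (B G)] is hermitian. *)
Lemma hermitian_of_colspace_weight m n (P : 'M[K]_m) (B : 'M[K]_(m, n)) G :
  hermitian P -> colspace_eq (P *m B) B -> B *m G *m B = B ->
  hermitian (P *m (B *m G)) -> hermitian (B *m G).
Proof.
move=> Ph /colspace_eqP [_ [W BW]] G1 G3w.
have BGP : ctr (B *m G) *m P = P *m (B *m G) by rewrite -[RHS]G3w (ctr_mul P) Ph.
have BGB : ctr (B *m G) *m B = B.
  by rewrite {2}BW !mulmxA BGP -!mulmxA (mulmxA G) (mulmxA B) (mulmxA B G) G1 mulmxA -BW.
have BGBG : ctr (B *m G) *m (B *m G) = B *m G by rewrite mulmxA BGB.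
by rewrite /hermitian -{1}BGBG ctr_mul ctrK BGBG.
Qed.
End WeightedHermitian.

Section WeightedSet13.
Variables (K : numClosedFieldType) (m n : nat).
Variables (P : 'M[K]_m) (Q : 'M[K]_n) (B : 'M[K]_(m, n)) (G0 : 'M[K]_(n, m)).
Hypotheses (P_herm : hermitian P) (P_unit : P \in unitmx).
Hypotheses (Q_herm : hermitian Q) (Q_unit : Q \in unitmx).
Hypotheses (G0_w : wginv134 P Q B G0) (G0_2 : G0 *m B *m G0 = G0).

Let W := wginv134 P Q B.
Let R1 := colspace_eq (P *m B) B.

Let G0_1 : B *m G0 *m B = B. Proof. by case: G0_w. Qed.

Lemma wginv134E G : W G <-> [/\ B *m G *m B = B, B *m G = B *m G0 & G *m B = G0 *m B].
Proof.
case: G0_w => _ G03 G04; split=> [[G1 G3 G4]|[G1 BG GB]]; last by split; rewrite ?BG ?GB.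
split=> //; first exact: ginv13w_mulmx_unique G1 G0_1 G3 G03.
exact: ginv14w_mulmx_unique G1 G0_1 G4 G04.
Qed.

Lemma wginv134_B0 G : B = 0 -> W G.
Proof. by move=> B0; rewrite /W /wginv134 /hermitian B0 !(mulmx0, mul0mx, ctr0). Qed.

Lemma ginv12_sub_wginv134 :
  set_sub (ginv [:: 1; 2]%N B) W -> B = 0 \/ (\rank B = m /\ \rank B = n).
Proof.
move=> sub12; have [->|B0] := eqVneq B 0; [by left | right].
split; apply/eqP; apply: contraT => /eqP rB.
  have [G [G12 GB BG]] := ginv12_perturb_left G0_1 G0_2 rB B0.
  by have [_ BG' _] := (wginv134E G).1 (sub12 G G12); rewrite BG' eqxx in BG.
have [G [G12 BG GB]] := ginv12_perturb_right G0_1 G0_2 rB B0.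
by have [_ _ GB'] := (wginv134E G).1 (sub12 G G12); rewrite GB' eqxx in GB.
Qed.

Lemma wginv134_eq_ginv1 :
  B = 0 \/ (\rank B = m /\ \rank B = n) -> set_eq W (ginv [:: 1]%N B).
Proof.
move=> B0r G; split=> [[G1 _ _]|/ginv_singleP G1]; first exact/ginv_singleP.
case: B0r => [B0|[rBm rBn]]; first exact: wginv134_B0.
apply/wginv134E; split=> //.
  by rewrite (mulmx_ginv_full_row rBm G1) (mulmx_ginv_full_row rBm G0_1).
by rewrite (mulmx_ginv_full_col rBn G1) (mulmx_ginv_full_col rBn G0_1).
Qed.

Lemma wginv134_ginv1_relations :
  set_sub W (ginv [:: 1]%N B)
  /\ (set_sub (ginv [:: 1]%N B) W <-> set_eq W (ginv [:: 1]%N B))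
  /\ (set_eq W (ginv [:: 1]%N B) <-> B = 0 \/ (\rank B = m /\ \rank B = n)).
Proof.
have sub1 : set_sub W (ginv [:: 1]%N B) by move=> G [G1 _ _]; apply/ginv_singleP.
split=> //; split.
- split=> [sub G|eq1 G]; last exact: (eq1 G).2.
  by split; [exact: sub1 | exact: sub].
- split=> [eq1|]; last exact: wginv134_eq_ginv1.
  by apply: ginv12_sub_wginv134 => G /ginv_pairP [G1 _]; apply/(eq1 G).2/ginv_singleP.
Qed.

Lemma wginv134_sub_ginv12 : set_sub W (ginv [:: 1; 2]%N B) <-> \rank B = m \/ \rank B = n.
Proof.
split=> [sub|rB G [G1 _ _]]; last first.
  apply/ginv_pairP; split=> //=; case: rB => rB.
    by rewrite -mulmxA (mulmx_ginv_full_row rB G1) mulmx1.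
  by rewrite (mulmx_ginv_full_col rB G1) mul1mx.
have [rBm|/eqP rBm] := eqVneq (\rank B) m; first by left.
have [rBn|/eqP rBn] := eqVneq (\rank B) n; first by right.
have [G [G1 BG GB G2]] := ginv1_perturb_not2 G0_1 G0_2 rBm rBn.
have /ginv_pairP [_ /= G2'] := sub G ((wginv134E G).2 (And3 G1 BG GB)).
by rewrite G2' eqxx in G2.
Qed.

Lemma wginv134_ginv12_relations (m_gt0 : (0 < m)%N) (n_gt0 : (0 < n)%N) :
  set_meets W (ginv [:: 1; 2]%N B)
  /\ (set_sub (ginv [:: 1; 2]%N B) W <-> B = 0 \/ (\rank B = m /\ \rank B = n))
  /\ (set_sub W (ginv [:: 1; 2]%N B) <-> \rank B = m \/ \rank B = n)
  /\ (set_eq W (ginv [:: 1; 2]%N B) <-> \rank B = m /\ \rank B = n).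
Proof.
have rank_full : \rank B = m /\ \rank B = n -> set_eq W (ginv [:: 1; 2]%N B).
  move=> rB G; split; first by move=> WG; apply: wginv134_sub_ginv12.2 => //; left; case: rB.
  by move=> /ginv_pairP [G1 _]; apply/(wginv134_eq_ginv1 (or_intror rB) G).2/ginv_singleP.
split; first by exists G0; split=> //; apply/ginv_pairP.
split.
  split; first exact: ginv12_sub_wginv134.
  by case=> [B0 G _|/rank_full eq12 G /(eq12 G).2 //]; exact: wginv134_B0.
split; first exact: wginv134_sub_ginv12.
split=> [eq12|]; last exact: rank_full.
have [B0|//] := ginv12_sub_wginv134 (fun G => (eq12 G).2).
have := wginv134_sub_ginv12.1 (fun G => (eq12 G).1); rewrite B0 mxrank0.
by case=> rB; [move: m_gt0 | move: n_gt0]; rewrite -rB.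
Qed.

Let colspace_of_hermitian G : W G -> hermitian (B *m G) -> R1.
Proof. by case=> G1 G3w _; exact: colspace_weight_of_hermitian G1 G3w. Qed.

Let hermitian_of_colspace G : R1 -> W G -> hermitian (B *m G).
Proof. by move=> R1B [G1 G3w _]; exact: hermitian_of_colspace_weight R1B G1 G3w. Qed.

Let colspace_of_ginv123_sub : set_sub (ginv [:: 1; 2; 3]%N B) W -> R1.
Proof.
move=> sub; have [Bd /moore_penroseP [Bd1 Bd2 Bd3 _]] := moore_penrose_exists B.
by apply: (@colspace_of_hermitian Bd _ Bd3); apply: sub; apply/ginv_tripleP.
Qed.

Let ginv13_sub_of_rank : \rank B = n -> R1 -> set_sub (ginv [:: 1; 3]%N B) W.
Proof.
move=> rBn R1B G /ginv_pairP [G1 G3]; apply/wginv134E; split=> //.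
  exact: ginv13_mulmx_unique G1 G0_1 G3 (hermitian_of_colspace R1B G0_w).
by rewrite (mulmx_ginv_full_col rBn G1) (mulmx_ginv_full_col rBn G0_1).
Qed.

Lemma wginv134_sub_ginv13 : set_sub W (ginv [:: 1; 3]%N B) <-> R1.
Proof.
split=> [sub|R1B G WG].
  by have /ginv_pairP [_ G03] := sub G0 G0_w; exact: colspace_of_hermitian G0_w G03.
by apply/ginv_pairP; split; [case: WG | exact: hermitian_of_colspace].
Qed.

Lemma ginv123_sub_wginv134 :
  set_sub (ginv [:: 1; 2; 3]%N B) W <-> B = 0 \/ (\rank B = n /\ R1).
Proof.
split=> [sub|]; last first.
  case=> [B0 G _|[rBn R1B] G /ginv_tripleP [G1 _ G3]]; first exact: wginv134_B0.
  by apply: ginv13_sub_of_rank => //; apply/ginv_pairP.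
have R1B := colspace_of_ginv123_sub sub.
have [->|B0] := eqVneq B 0; [by left | right; split=> //].
apply/eqP; apply: contraT => /eqP rBn.
have [G [/ginv_pairP [G1 G2] BG GB]] := ginv12_perturb_right G0_1 G0_2 rBn B0.
have G3 : hermitian (B *m G) by rewrite BG; exact: hermitian_of_colspace R1B G0_w.
have G123 : ginv [:: 1; 2; 3]%N B G by apply/ginv_tripleP.
by have [_ _ GB'] := (wginv134E G).1 (sub G G123); rewrite GB' eqxx in GB.
Qed.

Lemma wginv134_eq_ginv13 : set_eq W (ginv [:: 1; 3]%N B) <-> B = 0 \/ (\rank B = n /\ R1).
Proof.
split=> [eq13|].
  apply/ginv123_sub_wginv134 => G /ginv_tripleP [G1 _ G3].
  by apply/(eq13 G).2/ginv_pairP.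
case=> [B0 G|[rBn R1B] G].
  by split=> _; [apply/ginv_pairP; rewrite /= B0 !mul0mx ctr0 | exact: wginv134_B0].
by split; [exact: wginv134_sub_ginv13.2 R1B G | exact: ginv13_sub_of_rank].
Qed.

Lemma wginv134_ginv13_relations :
  (set_meets W (ginv [:: 1; 3]%N B) <-> set_sub W (ginv [:: 1; 3]%N B))
  /\ (set_sub W (ginv [:: 1; 3]%N B) <-> R1)
  /\ (set_sub (ginv [:: 1; 3]%N B) W <-> set_eq W (ginv [:: 1; 3]%N B))
  /\ (set_eq W (ginv [:: 1; 3]%N B) <-> B = 0 \/ (\rank B = n /\ R1)).
Proof.
split.
  split=> [[G [WG /ginv_pairP [_ G3]]]|sub]; last by exists G0; split; last exact: sub.
  exact/wginv134_sub_ginv13/(colspace_of_hermitian WG G3).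
split; first exact: wginv134_sub_ginv13.
split; last exact: wginv134_eq_ginv13.
split=> [sub G|eq13 G]; last exact: (eq13 G).2.
have R1B : R1 by apply: colspace_of_ginv123_sub => H /ginv_tripleP [H1 _ H3]; apply/sub/ginv_pairP.
by split; [exact: wginv134_sub_ginv13.2 R1B G | exact: sub].
Qed.

Lemma wginv134_ginv123_relations (m_gt0 : (0 < m)%N) (n_gt0 : (0 < n)%N) :
  (set_meets W (ginv [:: 1; 2; 3]%N B) <-> R1)
  /\ (set_sub (ginv [:: 1; 2; 3]%N B) W <-> B = 0 \/ (\rank B = n /\ R1))
  /\ (set_sub W (ginv [:: 1; 2; 3]%N B) <-> R1 /\ \rank B = minn m n)
  /\ (set_eq W (ginv [:: 1; 2; 3]%N B) <-> \rank B = n /\ R1).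
Proof.
have rBm := rank_leq_row B; have rBn := rank_leq_col B.
have sub123 : set_sub W (ginv [:: 1; 2; 3]%N B) <-> R1 /\ \rank B = minn m n.
  split=> [sub|[R1B rB] G WG].
    split; first by apply/wginv134_sub_ginv13 => G /sub /ginv_tripleP [G1 _ G3]; apply/ginv_pairP.
    suff : \rank B = m \/ \rank B = n by lia.
    by apply/wginv134_sub_ginv12 => G /sub /ginv_tripleP [G1 G2 _]; apply/ginv_pairP.
  have /ginv_pairP [G1 G2] := wginv134_sub_ginv12.2 (ltac:(lia)) G WG.
  have /ginv_pairP [_ G3] := wginv134_sub_ginv13.2 R1B G WG.
  exact/ginv_tripleP.
split.
  split=> [[G [WG /ginv_tripleP [_ _ G3]]]|R1B]; first exact: colspace_of_hermitian WG G3.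
  by exists G0; split=> //; apply/ginv_tripleP; split=> //; exact: hermitian_of_colspace.
split; first exact: ginv123_sub_wginv134.
split; first exact: sub123.
split=> [eq123|[rBn' R1B] G].
  have [B0|//] := ginv123_sub_wginv134.1 (fun G => (eq123 G).2).
  by have [_ rB] := sub123.1 (fun G => (eq123 G).1); rewrite B0 mxrank0 in rB; lia.
by split; [apply: sub123.2; split=> //; lia | apply: ginv123_sub_wginv134.2; right].
Qed.
End WeightedSet13.

Section ConjugateTransposeDuality.
Variables (K : numClosedFieldType) (m n : nat) (B : 'M[K]_(m, n)) (G : 'M[K]_(n, m)).

Lemma penrose1_ctr : penrose 1%N B G <-> penrose 1%N (ctr B) (ctr G).
Proof. by rewrite /= -!ctr_mul mulmxA; split=> [->|/ctr_inj]. Qed.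

Lemma penrose2_ctr : penrose 2%N B G <-> penrose 2%N (ctr B) (ctr G).
Proof. by rewrite /= -!ctr_mul mulmxA; split=> [->|/ctr_inj]. Qed.

Lemma penrose4_ctr : penrose 4%N B G <-> penrose 3%N (ctr B) (ctr G).
Proof. by rewrite /= -ctr_mul; exact: iff_sym (hermitian_ctr _). Qed.

Lemma ginv14_ctr : ginv [:: 1; 4]%N B G <-> ginv [:: 1; 3]%N (ctr B) (ctr G).
Proof. by rewrite !ginv_pairP penrose1_ctr penrose4_ctr. Qed.

Lemma ginv124_ctr : ginv [:: 1; 2; 4]%N B G <-> ginv [:: 1; 2; 3]%N (ctr B) (ctr G).
Proof.
split=> /ginv_tripleP [G1 G2 G4]; apply/ginv_tripleP.
  by split; [exact/penrose1_ctr | exact/penrose2_ctr | exact/penrose4_ctr].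
by split; [exact/penrose1_ctr | exact/penrose2_ctr | exact/penrose4_ctr].
Qed.

Lemma wginv134_ctr P Q : hermitian P -> hermitian Q ->
  wginv134 P Q B G <-> wginv134 Q P (ctr B) (ctr G).
Proof.
move=> Ph Qh; split=> -[G1 G3 G4]; split; try exact/penrose1_ctr.
- by rewrite -Qh -!ctr_mul; apply/hermitian_ctr.
- by rewrite -Ph -!ctr_mul; apply/hermitian_ctr.
- by apply/hermitian_ctr; rewrite !ctr_mul Ph.
- by apply/hermitian_ctr; rewrite !ctr_mul Qh.
Qed.
End ConjugateTransposeDuality.

Section WeightedSet14.
Variables (K : numClosedFieldType) (m n : nat).
Variables (P : 'M[K]_m) (Q : 'M[K]_n) (B : 'M[K]_(m, n)) (G0 : 'M[K]_(n, m)).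
Hypotheses (P_herm : hermitian P) (P_unit : P \in unitmx).
Hypotheses (Q_herm : hermitian Q) (Q_unit : Q \in unitmx).
Hypotheses (G0_w : wginv134 P Q B G0) (G0_2 : G0 *m B *m G0 = G0).

Let W := wginv134 P Q B.
Let R2 := colspace_eq (Q *m ctr B) (ctr B).

Let W_ctr G : W G <-> wginv134 Q P (ctr B) (ctr G) := wginv134_ctr B G P_herm Q_herm.
Let G0c_w : wginv134 Q P (ctr B) (ctr G0) := (W_ctr G0).1 G0_w.
Let G0c_2 : ctr G0 *m ctr B *m ctr G0 = ctr G0 := (penrose2_ctr B G0).1 G0_2.

Lemma wginv134_ginv14_relations :
  (set_meets W (ginv [:: 1; 4]%N B) <-> set_sub W (ginv [:: 1; 4]%N B))
  /\ (set_sub W (ginv [:: 1; 4]%N B) <-> R2)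
  /\ (set_sub (ginv [:: 1; 4]%N B) W <-> set_eq W (ginv [:: 1; 4]%N B))
  /\ (set_eq W (ginv [:: 1; 4]%N B) <-> B = 0 \/ (\rank B = m /\ R2)).
Proof.
rewrite (set_meets_transport (@ctrK _ _ _) W_ctr (ginv14_ctr B)).
rewrite (set_sub_transport (@ctrK _ _ _) W_ctr (ginv14_ctr B)).
rewrite (set_sub_transport (@ctrK _ _ _) (ginv14_ctr B) W_ctr).
rewrite (set_eq_transport (@ctrK _ _ _) W_ctr (ginv14_ctr B)).
rewrite -(mxrank_ctr B) -(ctr_eq0 B).
exact: wginv134_ginv13_relations Q_herm Q_unit P_herm P_unit G0c_w G0c_2.
Qed.

Lemma wginv134_ginv124_relations (m_gt0 : (0 < m)%N) (n_gt0 : (0 < n)%N) :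
  (set_meets W (ginv [:: 1; 2; 4]%N B) <-> R2)
  /\ (set_sub (ginv [:: 1; 2; 4]%N B) W <-> B = 0 \/ (\rank B = m /\ R2))
  /\ (set_sub W (ginv [:: 1; 2; 4]%N B) <-> R2 /\ \rank B = minn m n)
  /\ (set_eq W (ginv [:: 1; 2; 4]%N B) <-> \rank B = m /\ R2).
Proof.
rewrite (set_meets_transport (@ctrK _ _ _) W_ctr (ginv124_ctr B)).
rewrite (set_sub_transport (@ctrK _ _ _) W_ctr (ginv124_ctr B)).
rewrite (set_sub_transport (@ctrK _ _ _) (ginv124_ctr B) W_ctr).
rewrite (set_eq_transport (@ctrK _ _ _) W_ctr (ginv124_ctr B)).
rewrite -(mxrank_ctr B) -(ctr_eq0 B) minnC.
exact: wginv134_ginv123_relations Q_herm Q_unit P_herm P_unit G0c_w G0c_2 n_gt0 m_gt0.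
Qed.
End WeightedSet14.

Section WeightedSet134.
Variables (K : numClosedFieldType) (m n : nat).
Variables (P : 'M[K]_m) (Q : 'M[K]_n) (B : 'M[K]_(m, n)) (G0 : 'M[K]_(n, m)).
Hypotheses (P_herm : hermitian P) (P_unit : P \in unitmx).
Hypotheses (Q_herm : hermitian Q) (Q_unit : Q \in unitmx).
Hypotheses (G0_w : wginv134 P Q B G0) (G0_2 : G0 *m B *m G0 = G0).

Let W := wginv134 P Q B.
Let R1 := colspace_eq (P *m B) B.
Let R2 := colspace_eq (Q *m ctr B) (ctr B).

Let G0_1 : B *m G0 *m B = B. Proof. by case: G0_w. Qed.

Let rel13 := wginv134_ginv13_relations P_herm P_unit Q_herm Q_unit G0_w G0_2.
Let rel14 := wginv134_ginv14_relations P_herm P_unit Q_herm Q_unit G0_w G0_2.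

Lemma colspaces_of_wginv134_meets_ginv134 : set_meets W (ginv [:: 1; 3; 4]%N B) -> R1 /\ R2.
Proof.
have [meets13 [sub13 _]] := rel13; have [meets14 [sub14 _]] := rel14.
case=> G [WG /ginv_tripleP [G1 G3 G4]].
by split; [apply/sub13/meets13 | apply/sub14/meets14]; exists G; split=> //; apply/ginv_pairP.
Qed.

Lemma wginv134_eq_ginv134 : R1 /\ R2 -> set_eq W (ginv [:: 1; 3; 4]%N B).
Proof.
have [_ [sub13 _]] := rel13; have [_ [sub14 _]] := rel14.
case=> /sub13 W13 /sub14 W14 G; split=> [WG|/ginv_tripleP [G1 G3 G4]].
  have /ginv_pairP [G1 G3] := W13 G WG; have /ginv_pairP [_ G4] := W14 G WG.
  exact/ginv_tripleP.
have /ginv_pairP [_ G03] := W13 G0 G0_w; have /ginv_pairP [_ G04] := W14 G0 G0_w.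
apply/(wginv134E P_herm P_unit Q_herm Q_unit G0_w); split=> //.
  exact: ginv13_mulmx_unique G1 G0_1 G3 G03.
exact: ginv14_mulmx_unique G1 G0_1 G4 G04.
Qed.

Lemma wginv134_ginv134_relations :
  (set_meets W (ginv [:: 1; 3; 4]%N B) <-> set_eq W (ginv [:: 1; 3; 4]%N B))
  /\ (set_eq W (ginv [:: 1; 3; 4]%N B) <-> R1 /\ R2).
Proof.
have meets_of_eq : set_eq W (ginv [:: 1; 3; 4]%N B) -> set_meets W (ginv [:: 1; 3; 4]%N B).
  by move=> eq134; exists G0; split=> //; apply/(eq134 G0).1.
split; first by split=> [/colspaces_of_wginv134_meets_ginv134/wginv134_eq_ginv134|/meets_of_eq].
by split=> [/meets_of_eq/colspaces_of_wginv134_meets_ginv134|/wginv134_eq_ginv134].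
Qed.

Lemma moore_penrose_wginv134 Bd : moore_penrose B Bd -> W Bd <-> R1 /\ R2.
Proof.
move=> /moore_penroseP [Bd1 _ Bd3 Bd4].
have Bd134 : ginv [:: 1; 3; 4]%N B Bd by apply/ginv_tripleP.
split=> [WBd|/wginv134_eq_ginv134 eq134]; last exact/(eq134 Bd).2.
by apply: colspaces_of_wginv134_meets_ginv134; exists Bd.
Qed.
End WeightedSet134.

Section Conjugation.
Variables (K : numClosedFieldType) (m n : nat).
Variables (A : 'M[K]_m) (B : 'M[K]_(m, n)) (C : 'M[K]_n).
Hypotheses (A_unit : A \in unitmx) (C_unit : C \in unitmx).

Let M := A *m B *m C.

Lemma eq_mulmx_units p q (U : 'M[K]_p) (V : 'M[K]_q) (X Y : 'M[K]_(p, q)) :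
  U \in unitmx -> V \in unitmx -> U *m X *m V = U *m Y *m V <-> X = Y.
Proof.
move=> Uu Vu; split=> [|-> //].
move=> /(congr1 (fun Z => invmx U *m Z *m invmx V)).
by rewrite !mulmxA !(mulmxK Vu) !(mulVmx Uu) !mul1mx.
Qed.

(* [A^* (A Z A^-1) A = A^* A Z] *)
Lemma hermitian_similar_l (Z : 'M[K]_m) :
  hermitian (A *m Z *m invmx A) <-> hermitian (ctr A *m A *m Z).
Proof.
have cAu : ctr A \in unitmx by rewrite unitmx_ctr.
rewrite /hermitian -(eq_mulmx_units _ _ cAu A_unit) !ctr_mul ctrK ctr_invmx !mulmxA.
by rewrite (mulmxV cAu) mul1mx (mulmxKV A_unit).
Qed.

Lemma hermitian_similar_r (Z : 'M[K]_n) :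
  hermitian (invmx C *m Z *m C) <-> hermitian (Z *m (C *m ctr C)).
Proof.
have cCu : ctr C \in unitmx by rewrite unitmx_ctr.
rewrite /hermitian -(eq_mulmx_units _ _ C_unit cCu) !ctr_mul ctrK ctr_invmx !mulmxA.
by rewrite (mulmxKV cCu) (mulmxV C_unit) mul1mx.
Qed.

Lemma conjmxK G : C *m (invmx C *m G *m invmx A) *m A = G.
Proof. by rewrite !mulmxA (mulmxV C_unit) mul1mx (mulmxKV A_unit). Qed.

Lemma conjmxKV H : invmx C *m (C *m H *m A) *m invmx A = H.
Proof. by rewrite !mulmxA (mulVmx C_unit) mul1mx (mulmxK A_unit). Qed.

Lemma tgi_conj s H : tgi s A B C H <-> ginv s B (C *m H *m A).
Proof.
split=> [[G [Gs ->]]|Hs]; first by rewrite conjmxK.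
by exists (C *m H *m A); rewrite conjmxKV.
Qed.

Lemma ginv134_conj H :
  ginv [:: 1; 3; 4]%N M H <-> wginv134 (ctr A *m A) (C *m ctr C) B (C *m H *m A).
Proof.
have p1 : penrose 1%N M H <-> B *m (C *m H *m A) *m B = B.
  by rewrite /= -(eq_mulmx_units _ B A_unit C_unit) !mulmxA.
have p3 : penrose 3%N M H <-> hermitian (ctr A *m A *m (B *m (C *m H *m A))).
  by rewrite -hermitian_similar_l /= /hermitian !mulmxA (mulmxK A_unit).
have p4 : penrose 4%N M H <-> hermitian (C *m H *m A *m B *m (C *m ctr C)).
  by rewrite -hermitian_similar_r /= /hermitian !mulmxA (mulVmx C_unit) mul1mx.
split=> [/ginv_tripleP [/p1 H1 /p3 H3 /p4 H4] | [/p1 H1 /p3 H3 /p4 H4]]; first by split.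
exact/ginv_tripleP.
Qed.

(* The transported Moore-Penrose inverse of [M]. *)
Lemma exists_wginv134_ginv2 :
  exists2 G0, wginv134 (ctr A *m A) (C *m ctr C) B G0 & G0 *m B *m G0 = G0.
Proof.
have [H0 /moore_penroseP [H1 /= H2 H3 H4]] := moore_penrose_exists M.
exists (C *m H0 *m A); first by apply/ginv134_conj/ginv_tripleP.
by rewrite -{3}H2 /M !mulmxA.
Qed.
End Conjugation.

Theorem theorem4p2 (K : numClosedFieldType) (m n : nat)
  (A : 'M[K]_m) (B : 'M[K]_(m, n)) (C : 'M[K]_n)
  (hm : (0 < m)%N) (hn : (0 < n)%N)
  (hA : A \in unitmx) (hC : C \in unitmx) :
  let M := A *m B *m C in
  let M134 := ginv [:: 1; 3; 4]%N M in
  let T s := tgi s A B C in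
  let R1 := colspace_eq (ctr A *m A *m B) B in
  let R2 := colspace_eq (C *m ctr C *m ctr B) (ctr B) in
  let B0r := B = 0 \/ (\rank B = m /\ \rank B = n) in
  (* (49) *)
  (set_sub M134 (T [:: 1]%N)
   /\ (set_sub (T [:: 1]%N) M134 <-> set_eq M134 (T [:: 1]%N))
   /\ (set_eq M134 (T [:: 1]%N) <-> B0r))
  (* (50) *)
  /\ (set_meets M134 (T [:: 1; 2]%N)
   /\ (set_sub (T [:: 1; 2]%N) M134 <-> B0r)
   /\ (set_sub M134 (T [:: 1; 2]%N) <-> (\rank B = m \/ \rank B = n))
   /\ (set_eq M134 (T [:: 1; 2]%N) <-> (\rank B = m /\ \rank B = n)))
  (* (51) *)
  /\ ((set_meets M134 (T [:: 1; 3]%N) <-> set_sub M134 (T [:: 1; 3]%N))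
   /\ (set_sub M134 (T [:: 1; 3]%N) <-> R1)
   /\ (set_sub (T [:: 1; 3]%N) M134 <-> set_eq M134 (T [:: 1; 3]%N))
   /\ (set_eq M134 (T [:: 1; 3]%N) <-> (B = 0 \/ (\rank B = n /\ R1))))
  (* (52) *)
  /\ ((set_meets M134 (T [:: 1; 4]%N) <-> set_sub M134 (T [:: 1; 4]%N))
   /\ (set_sub M134 (T [:: 1; 4]%N) <-> R2)
   /\ (set_sub (T [:: 1; 4]%N) M134 <-> set_eq M134 (T [:: 1; 4]%N))
   /\ (set_eq M134 (T [:: 1; 4]%N) <-> (B = 0 \/ (\rank B = m /\ R2))))
  (* (53) *)
  /\ ((set_meets M134 (T [:: 1; 2; 3]%N) <-> R1)
   /\ (set_sub (T [:: 1; 2; 3]%N) M134 <-> (B = 0 \/ (\rank B = n /\ R1)))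
   /\ (set_sub M134 (T [:: 1; 2; 3]%N) <-> (R1 /\ \rank B = minn m n))
   /\ (set_eq M134 (T [:: 1; 2; 3]%N) <-> (\rank B = n /\ R1)))
  (* (54) *)
  /\ ((set_meets M134 (T [:: 1; 2; 4]%N) <-> R2)
   /\ (set_sub (T [:: 1; 2; 4]%N) M134 <-> (B = 0 \/ (\rank B = m /\ R2)))
   /\ (set_sub M134 (T [:: 1; 2; 4]%N) <-> (R2 /\ \rank B = minn m n))
   /\ (set_eq M134 (T [:: 1; 2; 4]%N) <-> (\rank B = m /\ R2)))
  (* (55) *)
  /\ ((set_meets M134 (T [:: 1; 3; 4]%N) <-> set_eq M134 (T [:: 1; 3; 4]%N))
   /\ (set_eq M134 (T [:: 1; 3; 4]%N) <-> (R1 /\ R2)))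
  (* (56) *)
  /\ (forall Bd, moore_penrose B Bd ->
        (M134 (invmx C *m Bd *m invmx A) <-> (R1 /\ R2))).
Proof.
move=> M M134 T R1 R2 B0r.
have P_herm : hermitian (ctr A *m A) := hermitian_gram A.
have Q_herm : hermitian (C *m ctr C) by rewrite /hermitian ctr_mul ctrK.
have P_unit : ctr A *m A \in unitmx by rewrite unitmx_mul unitmx_ctr hA.
have Q_unit : C *m ctr C \in unitmx by rewrite unitmx_mul unitmx_ctr hC.
have M134E := ginv134_conj B hA hC; have TE := tgi_conj B hA hC.
have [G0 G0_w G0_2] := exists_wginv134_ginv2 B hA hC.
have fgK := conjmxK hA hC.
rewrite !(set_meets_transport fgK M134E (TE _)) !(set_sub_transport fgK M134E (TE _)).
rewrite !(set_sub_transport fgK (TE _) M134E) !(set_eq_transport fgK M134E (TE _)).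
split; first exact: wginv134_ginv1_relations P_herm P_unit Q_herm Q_unit G0_w G0_2.
split; first exact: wginv134_ginv12_relations P_herm P_unit Q_herm Q_unit G0_w G0_2 hm hn.
split; first exact: wginv134_ginv13_relations P_herm P_unit Q_herm Q_unit G0_w G0_2.
split; first exact: wginv134_ginv14_relations P_herm P_unit Q_herm Q_unit G0_w G0_2.
split; first exact: wginv134_ginv123_relations P_herm P_unit Q_herm Q_unit G0_w G0_2 hm hn.
split; first exact: wginv134_ginv124_relations P_herm P_unit Q_herm Q_unit G0_w G0_2 hm hn.
split; first exact: wginv134_ginv134_relations P_herm P_unit Q_herm Q_unit G0_w G0_2.
move=> Bd BdMP; apply: iff_trans (M134E _) _; rewrite fgK.
exact: (moore_penrose_wginv134 P_herm P_unit Q_herm Q_unit G0_w G0_2 BdMP).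
Qed.
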